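(* Let $d$ be an odd prime, $n\in\mathbb{N}$, $A$ a multiplicative abelian group with an embedding $\zeta:\mathbb{Z}_d\to A$, and $W_1,W_2\in M_n(\mathbb{Z}_d)$ such that $\Omega_i=W_i-W_i^T$ has full rank over $\mathbb{Z}_d$ (i.e. is a symplectic form) for $i=1,2$. Then the polar commutator groups $\mathcal{G}_d^n(A,\zeta,W_1)$ and $\mathcal{G}_d^n(A,\zeta,W_2)$ are isomorphic.
   Context: An embedding $\zeta:\mathbb{Z}_d\to A$ is an injective group homomorphism. Let $F\subseteq A$ be a fixed set of representatives of $A/\zeta(\mathbb{Z}_d)$ with $1\in F$, and $r:A\to F$, $u:A\to\mathbb{Z}_d$ the maps with $a=r(a)\zeta(u(a))$. For $W\in M_n(\mathbb{Z}_d)$, $\mathcal{G}_d^n(A,\zeta,W)$ is the set $F\times\mathbb{Z}_d\times\mathbb{Z}_d^n$ with multiplication $(a,p,x)\cdot(b,q,y)=(r(ab),\,u(ab)+p+q+x^TWy,\,x+y)$. *)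

From HB Require Import structures.
From mathcomp Require Import all_boot all_order all_algebra.
Set Implicit Arguments. Unset Strict Implicit. Unset Printing Implicit Defensive.
Import GRing.Theory.
Local Open Scope ring_scope.

(* The abelian group A is written additively (A : zmodType); its unit 1 is 0.
   Z_d is 'F_d (equal to Z/dZ since d is prime).  Vectors of Z_d^n are
   column vectors 'cV['F_d]_n. *)

Definition embedding (d : nat) (A : zmodType) (zeta : 'F_d -> A) : Prop :=
  (forall p q, zeta (p + q) = zeta p + zeta q) /\ injective zeta.

Definition rep_system (d : nat) (A : zmodType) (zeta : 'F_d -> A)
  (F : A -> Prop) (r : A -> A) (u : A -> 'F_d) : Prop :=
  [/\ F 0,
      (forall a b, F a -> F b -> (exists k, a = b + zeta k) -> a = b),
      (forall a, exists f k, F f /\ a = f + zeta k),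
      (forall a, F (r a)) &
      (forall a, a = r a + zeta (u a))].

(* Underlying type of G_d^n(A, zeta, W); the group itself is the subset of
   elements whose first component lies in F. *)
Definition Gtype (d n : nat) (A : zmodType) := (A * 'F_d * 'cV['F_d]_n)%type.

Definition Gmem (d n : nat) (A : zmodType) (F : A -> Prop) (g : Gtype d n A) : Prop :=
  F g.1.1.

Definition Gmul (d n : nat) (A : zmodType) (r : A -> A) (u : A -> 'F_d)
  (W : 'M['F_d]_n) (g h : Gtype d n A) : Gtype d n A :=
  let: (a, p, x) := g in
  let: (b, q, y) := h in
  (r (a + b), u (a + b) + p + q + ((x^T *m W *m y) 0 0), x + y).

Definition group_iso (T : Type) (G1 G2 : T -> Prop) (mul1 mul2 : T -> T -> T) : Prop :=
  exists phi : T -> T,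
    [/\ (forall g, G1 g -> G2 (phi g)),
        (forall g h, G1 g -> G1 h -> phi g = phi h -> g = h),
        (forall h, G2 h -> exists g, G1 g /\ phi g = h) &
        (forall g h, G1 g -> G1 h -> phi (mul1 g h) = mul2 (phi g) (phi h))].

(* Since 2 is invertible in Z_d, the forms W_i - W_i^T are nondegenerate and
   alternating, so by Darboux's theorem M^T (W_2 - W_2^T) M = W_1 - W_1^T for
   some invertible M.  Then M^T W_2 M - W_1 is symmetric, hence of the form
   S + S^T, and the cocycles x^T W_1 y and (M x)^T W_2 (M y) differ by the
   coboundary of the quadratic form q(x) = x^T S x.  Therefore
   (a, p, x) |-> (a, p + q(x), M x) is an isomorphism; it leaves the
   A-component alone, so no property of zeta, F, r, u is used. *)

From mathcomp Require Import all_boot all_order all_algebra fingroup perm ring.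
Set Implicit Arguments. Unset Strict Implicit. Unset Printing Implicit Defensive.
Import GRing.Theory.
Local Open Scope ring_scope.

Section BilinearForms.
Variable R : comRingType.

Definition bform n (B : 'M[R]_n) (x y : 'cV[R]_n) : R := (x^T *m B *m y) 0 0.

Lemma bformDl n (B : 'M[R]_n) x1 x2 y :
  bform B (x1 + x2) y = bform B x1 y + bform B x2 y.
Proof. by rewrite /bform linearD /= !mulmxDl mxE. Qed.

Lemma bformDr n (B : 'M[R]_n) x y1 y2 :
  bform B x (y1 + y2) = bform B x y1 + bform B x y2.
Proof. by rewrite /bform !mulmxDr mxE. Qed.

Lemma bformZr n (B : 'M[R]_n) a x y : bform B x (a *: y) = a * bform B x y.
Proof. by rewrite /bform -!scalemxAr mxE. Qed.

Lemma bformNr n (B : 'M[R]_n) x y : bform B x (- y) = - bform B x y.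
Proof. by rewrite -scaleN1r bformZr mulN1r. Qed.

Lemma bformBr n (B : 'M[R]_n) x y1 y2 :
  bform B x (y1 - y2) = bform B x y1 - bform B x y2.
Proof. by rewrite bformDr bformNr. Qed.

Lemma bform_addmx n (B1 B2 : 'M[R]_n) x y :
  bform (B1 + B2) x y = bform B1 x y + bform B2 x y.
Proof. by rewrite /bform mulmxDr mulmxDl mxE. Qed.

Lemma bform_oppmx n (B : 'M[R]_n) x y : bform (- B) x y = - bform B x y.
Proof. by rewrite /bform mulmxN mulNmx mxE. Qed.

Lemma bform_trmx n (B : 'M[R]_n) x y : bform B^T x y = bform B y x.
Proof.
rewrite /bform -[in RHS](trmxK (y^T *m B *m x)) [in RHS]mxE.
by rewrite !trmx_mul !trmxK mulmxA.
Qed.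

Lemma bform_congr n (B M : 'M[R]_n) x y :
  bform (M^T *m B *m M) x y = bform B (M *m x) (M *m y).
Proof. by rewrite /bform trmx_mul !mulmxA. Qed.

Lemma bform_delta n (B : 'M[R]_n) i j :
  bform B (delta_mx i 0) (delta_mx j 0) = B i j.
Proof. by rewrite /bform trmx_delta -rowE -colE !mxE. Qed.

Lemma congr_mxE n (B P : 'M[R]_n) i j :
  (P^T *m B *m P) i j = bform B (col i P) (col j P).
Proof. by rewrite -bform_delta bform_congr !colE. Qed.

Definition skew n (A : 'M[R]_n) : Prop := A^T = - A.

Lemma skew_skew_part n (W : 'M[R]_n) : skew (W - W^T).
Proof. by rewrite /skew linearB /= trmxK opprB. Qed.

Lemma skew_congr n (A P : 'M[R]_n) : skew A -> skew (P^T *m A *m P).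
Proof. by move=> skA; rewrite /skew !trmx_mul trmxK !mulmxA skA mulmxN mulNmx. Qed.

Lemma bform_skew n (A : 'M[R]_n) x y : skew A -> bform A x y = - bform A y x.
Proof. by move=> skA; rewrite -bform_trmx skA bform_oppmx. Qed.

End BilinearForms.

Section AlternatingForms.
Variable F : fieldType.
Hypothesis two_neq0 : (2 : F) != 0.

Lemma bform_alt n (A : 'M[F]_n) x : skew A -> bform A x x = 0.
Proof.
move=> /(bform_skew x x) Axx; apply/eqP; rewrite -(mulrI_eq0 _ (lregP two_neq0)).
by rewrite mulr2n mulrDl mul1r {1}Axx addNr.
Qed.

Lemma skew_diag n (A : 'M[F]_n) i : skew A -> A i i = 0.
Proof. by move=> skA; rewrite -bform_delta bform_alt. Qed.

Lemma unitmx_row_neq0 m (A : 'M[F]_m.+1) : A \in unitmx -> exists k, A 0 k != 0.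
Proof.
move=> A_unit; apply/existsP; apply: contraT => /existsPn A0k.
have row0 : row 0 A = 0 by apply/rowP => k; rewrite !mxE; apply/eqP/negPn/A0k.
have /rowP/(_ 0) := congr1 (row 0) (mulmxV A_unit).
by rewrite row_mul row0 mul0mx !mxE eqxx => /esym/eqP; rewrite oner_eq0.
Qed.

Lemma skew_unitmx_pivot m (A : 'M[F]_m.+2) : skew A -> A \in unitmx ->
  exists2 P : 'M[F]_m.+2, P \in unitmx & (P^T *m A *m P) 0 1 != 0.
Proof.
move=> skA A_unit; have [k A0k] := unitmx_row_neq0 A_unit.
have k_neq0 : k != 0 by apply: contraNneq A0k => ->; rewrite skew_diag.
pose s := tperm (1 : 'I_m.+2) k.
exists (perm_mx s); first exact: unitmx_perm.
rewrite tr_perm_mx -mulmxA -[s in A *m perm_mx s]invgK -col_permE -row_permE.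
by rewrite !mxE tpermV tpermL tpermD // eq_sym.
Qed.

Definition symp2 : 'M[F]_2 := \matrix_(i, j) ((i < j)%N%:R - (j < i)%N%:R).

Section DarbouxStep.
Variables (m : nat) (B : 'M[F]_m.+2).
Hypotheses (skB : skew B) (B01_neq0 : B 0 1 != 0).

Definition hyp_e : 'cV[F]_m.+2 := delta_mx 0 0.
Definition hyp_f : 'cV[F]_m.+2 := (B 0 1)^-1 *: delta_mx 1 0.
Definition orth_proj (v : 'cV[F]_m.+2) : 'cV[F]_m.+2 :=
  v + bform B hyp_f v *: hyp_e - bform B hyp_e v *: hyp_f.

(* The hyperbolic pair e, f (with B(e, f) = 1) followed by the projections of
   the remaining basis vectors onto the B-orthogonal of span(e, f); the
   resulting matrix is upper triangular with a nonzero diagonal. *)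
Definition darboux_col (j : 'I_m.+2) : 'cV[F]_m.+2 :=
  if j == 0 :> nat then hyp_e else if j == 1 :> nat then hyp_f
  else orth_proj (delta_mx j 0).

Definition darboux_mx : 'M[F]_m.+2 := \matrix_(i, j) darboux_col j i 0.

Lemma col_darboux_mx j : col j darboux_mx = darboux_col j.
Proof. by apply/matrixP => i k; rewrite !mxE (ord1 k). Qed.

Lemma bform_hyp_ee : bform B hyp_e hyp_e = 0. Proof. exact: bform_alt. Qed.
Lemma bform_hyp_ff : bform B hyp_f hyp_f = 0. Proof. exact: bform_alt. Qed.
Lemma bform_hyp_ef : bform B hyp_e hyp_f = 1.
Proof. by rewrite bformZr bform_delta mulVf. Qed.
Lemma bform_hyp_fe : bform B hyp_f hyp_e = -1.
Proof. by rewrite bform_skew // bform_hyp_ef. Qed.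

Lemma bform_hyp_e_orth v : bform B hyp_e (orth_proj v) = 0.
Proof.
rewrite bformBr bformDr (bformZr _ _ _ hyp_e) (bformZr _ _ _ hyp_f).
by rewrite bform_hyp_ee bform_hyp_ef; ring.
Qed.

Lemma bform_hyp_f_orth v : bform B hyp_f (orth_proj v) = 0.
Proof.
rewrite bformBr bformDr (bformZr _ _ _ hyp_e) (bformZr _ _ _ hyp_f).
by rewrite bform_hyp_fe bform_hyp_ff; ring.
Qed.

Lemma darboux_mx_unit : darboux_mx \in unitmx.
Proof.
rewrite -unitmx_tr unitmxE det_trig.
  rewrite unitfE; apply/prodf_neq0 => i _; rewrite !mxE.
  case: i => [[|[|i]] lt_i]; rewrite /darboux_col /orth_proj /hyp_e /hyp_f /= !mxE /=.
  - exact: oner_neq0.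
  - by rewrite mulr1 invr_eq0.
  - by rewrite !eqxx !mulr0 subr0 addr0 oner_neq0.
apply/forallP => i; apply/forallP => j; apply/implyP => lt_ij; rewrite !mxE.
case: i lt_ij => [[|[|i]] lt_i] lt_ij; case: j lt_ij => [[|[|j]] lt_j] //= lt_ij.
all: rewrite /darboux_col /orth_proj /hyp_e /hyp_f /= !mxE /=.
all: rewrite ?mulr0 ?subr0 ?addr0 //.
by rewrite -val_eqE /= (gtn_eqF lt_ij).
Qed.

Lemma darboux_congr_block :
  (darboux_mx^T *m B *m darboux_mx : 'M_(2 + m))
  = block_mx symp2 0 0 (drsubmx (darboux_mx^T *m B *m darboux_mx : 'M_(2 + m))).
Proof.
set C : 'M_(2 + m) := darboux_mx^T *m B *m darboux_mx.
have CE (i j : 'I_(2 + m)) : C i j = bform B (darboux_col i) (darboux_col j).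
  by rewrite congr_mxE !col_darboux_mx.
clearbody C.
have C_ur (i : 'I_2) (j : 'I_m) : C (lshift m i) (rshift 2 j) = 0.
  rewrite CE {2}/darboux_col /=.
  by case: i => [[|[|i]] lt_i] //; rewrite /darboux_col /= ?bform_hyp_e_orth ?bform_hyp_f_orth.
rewrite -[LHS](submxK C); congr block_mx; apply/matrixP => i j; rewrite !mxE.
- rewrite CE; case: i => [[|[|i]] lt_i] //; case: j => [[|[|j]] lt_j] //.
  all: rewrite /darboux_col /=.
  + by rewrite bform_hyp_ee subrr.
  + by rewrite bform_hyp_ef subr0.
  + by rewrite bform_hyp_fe sub0r.
  + by rewrite bform_hyp_ff subrr.
- exact: C_ur.
- by rewrite CE bform_skew // -CE C_ur oppr0.
Qed.

End DarbouxStep.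

Lemma skew_unitmx_reduce m (A : 'M[F]_m.+2) : skew A -> A \in unitmx ->
  exists P : 'M[F]_m.+2, exists2 A' : 'M[F]_m,
    [/\ P \in unitmx, skew A' & A' \in unitmx]
    & (P^T *m A *m P : 'M_(2 + m)) = block_mx symp2 0 0 A'.
Proof.
move=> skA A_unit; have [P0 P0_unit B01_neq0] := skew_unitmx_pivot skA A_unit.
set B := P0^T *m A *m P0 in B01_neq0.
have skB : skew B by exact: skew_congr.
set P := P0 *m darboux_mx B.
have P_unit : P \in unitmx by rewrite unitmx_mul P0_unit darboux_mx_unit.
pose A' := drsubmx ((darboux_mx B)^T *m B *m darboux_mx B : 'M_(2 + m)).
have PAP : (P^T *m A *m P : 'M_(2 + m)) = block_mx symp2 0 0 A'.
  by rewrite -darboux_congr_block // trmx_mul !mulmxA.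
exists P, A' => //; split=> //.
- by rewrite /skew trmx_drsub (skew_congr _ skB); apply/matrixP => i j; rewrite !mxE.
- have : (P^T *m A *m P : 'M_(2 + m)) \in unitmx.
    by rewrite unitmx_mul (unitmx_mul P^T) unitmx_tr P_unit A_unit.
  by rewrite PAP !unitmxE det_ublock unitrM => /andP[].
Qed.

Lemma skew_unitmx_congr n (A1 A2 : 'M[F]_n) : skew A1 -> skew A2 ->
  A1 \in unitmx -> A2 \in unitmx ->
  exists2 M, M \in unitmx & M^T *m A2 *m M = A1.
Proof.
elim/ltn_ind: n A1 A2 => -[|[|m]] IH A1 A2 skA1 skA2 A1_unit A2_unit.
- by exists 1%:M; rewrite ?unitmx1 // [LHS]flatmx0 [RHS]flatmx0.
- have A1_0 : A1 = 0 by apply/matrixP => i j; rewrite !ord1 skew_diag // mxE.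
  by move: A1_unit; rewrite A1_0 unitmxE det0 unitr0.
have [P1 [A1' [P1_unit skA1' A1'_unit] P1A1P1]] := skew_unitmx_reduce skA1 A1_unit.
have [P2 [A2' [P2_unit skA2' A2'_unit] P2A2P2]] := skew_unitmx_reduce skA2 A2_unit.
have [M' M'_unit M'A2'M'] := IH m (leqnSn m.+1) A1' A2' skA1' skA2' A1'_unit A2'_unit.
pose D : 'M[F]_(2 + m) := block_mx 1%:M 0 0 M'.
have D_unit : D \in unitmx by rewrite unitmxE det_ublock det1 mul1r -unitmxE.
have DP2A2P2D : D^T *m (P2^T *m A2 *m P2 : 'M_(2 + m)) *m D = P1^T *m A1 *m P1.
  rewrite P2A2P2 P1A1P1 tr_block_mx !mulmx_block !trmx0 trmx1.
  by rewrite !(mul1mx, mul0mx, mulmx0, mulmx1, addr0, add0r) M'A2'M'.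
exists (P2 *m D *m invmx P1); first by rewrite !unitmx_mul P2_unit D_unit unitmx_inv.
rewrite [LHS](_ : _ = (invmx P1)^T *m (D^T *m (P2^T *m A2 *m P2) *m D) *m invmx P1).
  by rewrite DP2A2P2D !mulmxA -trmx_mul mulmxV // trmx1 mul1mx -mulmxA mulmxV // mulmx1.
by rewrite !trmx_mul !mulmxA.
Qed.

Lemma congr_skew_part_coboundary n (W1 W2 M : 'M[F]_n) :
  M^T *m (W2 - W2^T) *m M = W1 - W1^T ->
  exists S, M^T *m W2 *m M = W1 + (S + S^T).
Proof.
move=> congrM; pose K := M^T *m W2 *m M - W1.
have K_sym : K^T = K.
  apply/esym/eqP; rewrite -subr_eq0; apply/eqP.
  transitivity (M^T *m (W2 - W2^T) *m M - (W1 - W1^T)); last by rewrite congrM subrr.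
  rewrite /K linearB /= !trmx_mul trmxK mulmxA mulmxBr mulmxBl.
  by rewrite !opprB addrACA [RHS]addrACA [- W1 + _]addrC.
have halfD : 2^-1 + 2^-1 = 1 :> F by field.
exists (2^-1 *: K); rewrite linearZ /= K_sym -scalerDl halfD scale1r.
by rewrite addrC subrK.
Qed.

End AlternatingForms.

Section PolarGroupIsomorphism.
Variables (d n : nat) (A : zmodType) (F : A -> Prop) (r : A -> A) (u : A -> 'F_d).

Definition polar_map (S M : 'M['F_d]_n) (g : Gtype d n A) : Gtype d n A :=
  (g.1.1, g.1.2 + bform S g.2 g.2, M *m g.2).

Lemma Gmul_iso_coboundary (W1 W2 M S : 'M['F_d]_n) :
  M \in unitmx -> M^T *m W2 *m M = W1 + (S + S^T) ->
  group_iso (Gmem (d:=d) (n:=n) F) (Gmem F) (Gmul r u W1) (Gmul r u W2).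
Proof.
move=> M_unit congrM.
have cocycle x y : bform W2 (M *m x) (M *m y) + bform S x x + bform S y y
                   = bform W1 x y + bform S (x + y) (x + y).
  rewrite -bform_congr congrM !bform_addmx bform_trmx bformDl !bformDr; ring.
exists (polar_map S M); split.
- by case=> -[].
- move=> [[a p] x] [[b q] y] _ _ /eqP; rewrite /polar_map /= !xpair_eqE.
  case/andP=> /andP[/eqP-> /eqP pq] /eqP Mxy.
  have xy : x = y by rewrite -(mulKmx M_unit x) Mxy mulKmx.
  by rewrite xy in pq *; rewrite (addIr _ pq).
- move=> [[a q] y] Fa; exists (a, q - bform S (invmx M *m y) (invmx M *m y), invmx M *m y).
  by rewrite /polar_map /= subrK mulKVmx.
- move=> [[a p] x] [[b q] y] _ _; rewrite /polar_map /= mulmxDr.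
  congr (_, _, _); rewrite -/(bform W1 x y) -/(bform W2 (M *m x) (M *m y)).
  by rewrite -!addrA -cocycle; ring.
Qed.

End PolarGroupIsomorphism.

Lemma two_neq0_Fp d : prime d -> odd d -> (2 : 'F_d) != 0.
Proof.
move=> d_prime d_odd; rewrite -(dvdn_pcharf (pchar_Fp d_prime)).
apply: contraL d_odd => /(dvdn_leq (isT : 0 < 2)%N); rewrite leq_eqVlt ltnS.
by case/orP=> [/eqP-> | d_le1] //; have := prime_gt1 d_prime; rewrite ltnNge d_le1.
Qed.

Theorem proposition22 (d n : nat) (A : zmodType) (zeta : 'F_d -> A)
  (F : A -> Prop) (r : A -> A) (u : A -> 'F_d) (W1 W2 : 'M['F_d]_n) :
  prime d -> odd d ->
  embedding zeta ->
  rep_system zeta F r u ->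
  \rank (W1 - W1^T) = n ->
  \rank (W2 - W2^T) = n ->
  group_iso (Gmem (n:=n) (d:=d) F) (Gmem (n:=n) (d:=d) F) (Gmul r u W1) (Gmul r u W2).
Proof.
move=> d_prime d_odd _ _ rank1 rank2.
have two_neq0 := two_neq0_Fp d_prime d_odd.
have unit_of_rank (W : 'M['F_d]_n) : \rank (W - W^T) = n -> W - W^T \in unitmx.
  by move=> rankW; rewrite -row_free_unit /row_free rankW.
have [M M_unit congrM] := skew_unitmx_congr two_neq0 (skew_skew_part W1)
  (skew_skew_part W2) (unit_of_rank W1 rank1) (unit_of_rank W2 rank2).
have [S coboundary] := congr_skew_part_coboundary two_neq0 congrM.
exact: Gmul_iso_coboundary M_unit coboundary.
Qed.
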